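(* Let $n=2^uv$ with $v$ odd and $u\ge 0$. Suppose $(\varepsilon,\beta,\gamma;(12))\in\mathrm{Par}(n)$, where every cycle of $\beta$ has length divisible by $2^u$. Then: <ul> <li>(i) the number of cycles of odd length of $\beta$ is at least the number of cycles of odd length of $\gamma$;</li> <li>(ii) if $u\ge1$, then $\gamma$ has no cycles of odd length.</li> </ul> Fixed points count as cycles of length $1$.
   Context: A Latin square of order $n$ is an $n\times n$ array with rows, columns and symbols indexed by $[n]$, each symbol occurring once in each row and each column, with triple set $O(L)$. Permutations act on the right; $\varepsilon$ is the identity. A paratopism $(\alpha,\beta,\gamma;(12))$ maps $L$ to $L^\sigma$ with triple set $\{(y\beta,x\alpha,z\gamma):(x,y,z)\in O(L)\}$; it is an autoparatopism of $L$ if $L^\sigma=L$. $\mathrm{Par}(n)$ is the set of paratopisms that are autoparatopisms of at least one Latin square of order $n$. *)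

From mathcomp Require Import all_boot all_fingroup.
Set Implicit Arguments. Unset Strict Implicit. Unset Printing Implicit Defensive.

(* Rows, columns and symbols are indexed by 'I_n (i.e. {0,...,n-1} ~ [n]).
   A Latin square is given by its entry function L x y = symbol in cell (x,y). *)
Definition is_latin (n : nat) (L : 'I_n -> 'I_n -> 'I_n) : Prop :=
  (forall x : 'I_n, injective (L x)) /\ (forall y : 'I_n, injective (fun x => L x y)).

Definition triples (n : nat) (L : 'I_n -> 'I_n -> 'I_n) : {set 'I_n * 'I_n * 'I_n} :=
  [set t : 'I_n * 'I_n * 'I_n | t.2 == L t.1.1 t.1.2].

(* Triple set of L^sigma for sigma = (alpha,beta,gamma;(12)):
   {(y beta, x alpha, z gamma) : (x,y,z) in O(L)}; permutations act on the
   right, so "x alpha" is the application alpha x. *)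
Definition paratopism12_image (n : nat) (alpha beta gamma : {perm 'I_n})
    (L : 'I_n -> 'I_n -> 'I_n) : {set 'I_n * 'I_n * 'I_n} :=
  [set (beta t.1.2, alpha t.1.1, gamma t.2) | t in triples L].

Definition is_autoparatopism12 (n : nat) (alpha beta gamma : {perm 'I_n})
    (L : 'I_n -> 'I_n -> 'I_n) : Prop :=
  paratopism12_image alpha beta gamma L = triples L.

Definition in_Par12 (n : nat) (alpha beta gamma : {perm 'I_n}) : Prop :=
  exists L : 'I_n -> 'I_n -> 'I_n, is_latin L /\ is_autoparatopism12 alpha beta gamma L.

Definition n_odd_cycles (n : nat) (s : {perm 'I_n}) : nat :=
  #|[set c in porbits s | odd #|c|]|.

From mathcomp Require Import all_boot all_fingroup.
Set Implicit Arguments. Unset Strict Implicit. Unset Printing Implicit Defensive.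

(* With alpha the identity, the autoparatopism says L (beta b, a) = gamma (L (a, b)):
   the cell permutation twist (a, b) = (beta b, a) carries the symbol of a cell to its
   gamma-image, and twist^2 = beta x beta.  Fix a symbol z on a gamma-cycle of length m.
   Twist^m permutes the n cells holding z, hence induces a permutation of the rows.  A
   cell returning to itself after an odd number j of twists has the form (a, beta^(j/2) a)
   with beta^j a = a; after an even number j, beta^(j/2) a = a.
   (ii) If m is odd and 2^u (u >= 1) divides every beta-cycle length, the 2-adic
   bookkeeping forces every row cycle to have length divisible by 2^(u+1), so 2^(u+1)
   divides n.
   (i) For u >= 1 this follows from (ii); for u = 0, n is odd, so some row cycle has odd length r, so the cell is fixed by an odd power
   twist^(mr); its row lies on an odd beta-cycle D, and z lies on the gamma-cycle of the
   "middle" cell (a, beta^((|D|-1)/2) a) of D, which does not depend on a in D.  So odd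
   gamma-cycles are images of odd beta-cycles. *)

Section PermCycles.

Variables (T : finType) (s : {perm T}).

Lemma iter_porbit_mod x j : iter (j %% #|porbit s x|) s x = iter j s x.
Proof.
rewrite [in RHS](divn_eq j #|porbit s x|) addnC iterD.
by congr iter; elim: (j %/ _) => //= q IHq; rewrite mulSn iterD -IHq iter_porbit.
Qed.

Lemma card_porbit_dvdn x j : iter j s x = x -> #|porbit s x| %| j.
Proof.
rewrite -iter_porbit_mod => fix_x.
have c_gt0 : 0 < #|porbit s x| by rewrite lt0n card_porbit_neq0.
have := nth_uniq x (i := j %% #|porbit s x|) (j := 0) _ _ (uniq_traject_porbit s x).
rewrite size_traject ltn_pmod // c_gt0 !nth_traject ?ltn_pmod //= fix_x eqxx.
by move=> /(_ isT isT) /esym.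
Qed.

Lemma dvdn_card_porbits d : (forall x, d %| #|porbit s x|) -> d %| #|T|.
Proof.
move=> d_dvd; have acts_s : [acts <[s]>%g, on [set: T] | 'P].
  by apply/actsP => a _ y; rewrite !inE.
rewrite -cardsT (card_partition (orbit_partition acts_s)).
by apply: dvdn_sum => _ /imsetP[y _ ->]; rewrite -porbitE.
Qed.

Lemma odd_card_porbit : odd #|T| -> exists x, odd #|porbit s x|.
Proof.
move=> odd_T; case: (pickP (fun x => odd #|porbit s x|)) => [x odd_x | even]; first by exists x.
suff : 2 %| #|T| by rewrite dvdn2 odd_T.
by apply: dvdn_card_porbits => x; rewrite dvdn2 even.
Qed.

End PermCycles.

Lemma half_odd_mul q c : odd q -> (q * c)./2 = q./2 * c + c./2.
Proof.
move=> odd_q; rewrite -{1}[q]odd_double_half odd_q add1n mulSn -mul2n -mulnA mul2n.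
by rewrite halfD odd_double andbF add0n doubleK addnC.
Qed.

Lemma autoparatopism12_1E n (beta gamma : {perm 'I_n}) L :
  is_autoparatopism12 1 beta gamma L -> forall a b, L (beta b) a = gamma (L a b).
Proof.
move=> autL a b; have : (beta b, a, gamma (L a b)) \in triples L.
  rewrite -autL; apply/imsetP; exists (a, b, L a b); first by rewrite inE.
  by rewrite /= perm1.
by rewrite inE => /eqP.
Qed.

Section Autoparatopism.

Variables (X : finType) (beta gamma : {perm X}) (L : X -> X -> X).
Hypothesis L_row_inj : forall a, injective (L a).
Hypothesis L_twist : forall a b, L (beta b) a = gamma (L a b).

Definition twist (p : X * X) : X * X := (beta p.2, p.1).

Lemma L_iter_twist j p :
  L (iter j twist p).1 (iter j twist p).2 = iter j gamma (L p.1 p.2).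
Proof. by elim: j => //= j <-; rewrite L_twist. Qed.

Lemma iter_twist_double k a b :
  iter k.*2 twist (a, b) = (iter k beta a, iter k beta b).
Proof. by elim: k => // k IHk; rewrite doubleS /= IHk. Qed.

Lemma twist_inj : injective twist.
Proof. by move=> [a b] [c d] [/perm_inj -> ->]. Qed.

Lemma iter_twist_inj j : injective (iter j twist).
Proof. by elim: j => // j IHj p q /= /twist_inj /IHj. Qed.

Lemma iter_twist_odd_fixed j a b : odd j -> iter j twist (a, b) = (a, b) ->
  b = iter j./2 beta a /\ iter j beta a = a.
Proof.
move=> odd_j; rewrite -[in iter j _ _](odd_double_half j) odd_j add1n /=.
rewrite iter_twist_double => -[fix_a fix_b]; split; first by rewrite fix_b.
by rewrite -[j]odd_double_half odd_j add1n -addnn -addSn iterD fix_b.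
Qed.

Lemma iter_twist_even_fixed j a b : ~~ odd j -> iter j twist (a, b) = (a, b) ->
  iter j./2 beta a = a.
Proof.
move=> even_j; rewrite -[in iter j _ _](odd_double_half j) (negbTE even_j) add0n.
by rewrite iter_twist_double => -[].
Qed.

Section SymbolCells.

Variables (z : X) (m : nat).
Hypothesis gamma_m_z : iter m gamma z = z.

Definition col_of (a : X) : X := invF (@L_row_inj a) z.

Lemma L_col_of a : L a (col_of a) = z.
Proof. exact: f_invF. Qed.

Definition next_row (a : X) : X := (iter m twist (a, col_of a)).1.

Lemma iter_twist_col_of a : iter m twist (a, col_of a) = (next_row a, col_of (next_row a)).
Proof.
have := L_iter_twist m (a, col_of a); rewrite /= L_col_of gamma_m_z /next_row.
case: (iter m twist _) => b c /= Lbc; congr pair.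
by apply: (@L_row_inj b); rewrite L_col_of.
Qed.

Lemma next_row_inj : injective next_row.
Proof.
move=> a a' eq_next; have := iter_twist_col_of a.
by rewrite eq_next -(iter_twist_col_of a') => /iter_twist_inj [].
Qed.

Definition row_perm : {perm X} := perm next_row_inj.

Lemma iter_twist_row_perm k a :
  iter (m * k) twist (a, col_of a) = (iter k row_perm a, col_of (iter k row_perm a)).
Proof.
elim: k => [|k IHk]; first by rewrite muln0.
by rewrite mulnS iterD IHk iter_twist_col_of /= permE.
Qed.

Lemma twist_cycle_col_of a :
  iter (m * #|porbit row_perm a|) twist (a, col_of a) = (a, col_of a).
Proof. by rewrite iter_twist_row_perm iter_porbit. Qed.

End SymbolCells.

Lemma pow2_dvdn_card_of_odd_cycle u z :
  0 < u -> (forall a, 2 ^ u %| #|porbit beta a|) -> odd #|porbit gamma z| ->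
  2 ^ u.+1 %| #|X|.
Proof.
move=> u_gt0 beta_dvd odd_m; set m := #|porbit gamma z| in odd_m.
have gamma_m_z : iter m gamma z = z by exact: iter_porbit.
apply: (dvdn_card_porbits (s := row_perm gamma_m_z)) => a.
have fix_cell := twist_cycle_col_of gamma_m_z a.
set r := #|porbit _ a| in fix_cell *.
have [odd_j | even_j] := boolP (odd (m * r)).
  have [_ /card_porbit_dvdn] := iter_twist_odd_fixed odd_j fix_cell.
  move=> /(dvdn_trans (beta_dvd a)) /(dvdn_trans (dvdn_exp2l 2 u_gt0)).
  by rewrite dvdn2 odd_j.
have /card_porbit_dvdn := iter_twist_even_fixed even_j fix_cell.
move=> /(dvdn_trans (beta_dvd a)) half_dvd.
have : 2 ^ u.+1 %| m * r.
  by rewrite -[m * r]odd_double_half (negbTE even_j) add0n -muln2 expnSr dvdn_mul.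
by rewrite Gauss_dvdr // coprimeXl // coprime2n.
Qed.

Definition mid_cycle (a : X) : {set X} :=
  porbit gamma (L a (iter #|porbit beta a|./2 beta a)).

Lemma mid_cycle_iter i a : mid_cycle (iter i beta a) = mid_cycle a.
Proof.
rewrite /mid_cycle -[in porbit beta _]permX porbit_perm.
rewrite -iterD addnC iterD.
have := L_iter_twist i.*2 (a, iter #|porbit beta a|./2 beta a).
by rewrite iter_twist_double /= => ->; rewrite -permX porbit_perm.
Qed.

Lemma odd_cycle_is_mid_cycle z : odd #|X| -> odd #|porbit gamma z| ->
  exists2 a, odd #|porbit beta a| & mid_cycle a = porbit gamma z.
Proof.
move=> odd_X odd_m; set m := #|porbit gamma z| in odd_m.
have gamma_m_z : iter m gamma z = z by exact: iter_porbit.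
have [a odd_r] := odd_card_porbit (row_perm gamma_m_z) odd_X.
have odd_j : odd (m * #|porbit (row_perm gamma_m_z) a|) by rewrite oddM odd_m.
have [col_a fix_a] := iter_twist_odd_fixed odd_j (twist_cycle_col_of gamma_m_z a).
have /dvdnP[q j_eq] := card_porbit_dvdn fix_a.
move: odd_j col_a; rewrite j_eq oddM => /andP[odd_q odd_c] col_a.
exists a => //.
have mid_a : iter #|porbit beta a|./2 beta a = col_of z a.
  by rewrite col_a -[RHS]iter_porbit_mod half_odd_mul // modnMDl iter_porbit_mod.
by rewrite /mid_cycle mid_a L_col_of.
Qed.

Lemma card_odd_porbits_le : odd #|X| ->
  #|[set c in porbits gamma | odd #|c|]| <= #|[set c in porbits beta | odd #|c|]|.
Proof.
move=> odd_X.
pose F (D : {set X}) := if [pick a in D] is Some a then mid_cycle a else set0.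
apply: leq_trans (leq_imset_card F _); apply: subset_leq_card.
apply/subsetP => C; rewrite inE => /andP[/imsetP[z _ ->] odd_m].
have [a odd_c mid_a] := odd_cycle_is_mid_cycle odd_X odd_m.
apply/imsetP; exists (porbit beta a); first by rewrite inE imset_f.
rewrite /F; case: pickP => [b /porbitP[i ->] | no_pick].
  by rewrite permX mid_cycle_iter.
by have := no_pick a; rewrite porbit_id.
Qed.

End Autoparatopism.

Theorem theorem4p6 (n u v : nat) (beta gamma : {perm 'I_n}) :
  odd v -> n = 2 ^ u * v ->
  in_Par12 1 beta gamma ->
  (forall c, c \in porbits beta -> 2 ^ u %| #|c|) ->
  n_odd_cycles gamma <= n_odd_cycles beta /\
  (1 <= u -> forall c, c \in porbits gamma -> ~~ odd #|c|).
Proof.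
move=> odd_v n_eq [L [[L_row_inj _] autL]] beta_dvd.
have L_twist := autoparatopism12_1E autL.
have beta_dvd_porbit a : 2 ^ u %| #|porbit beta a| by apply/beta_dvd/imset_f.
have gamma_even : 0 < u -> forall c, c \in porbits gamma -> ~~ odd #|c|.
  move=> u_gt0 _ /imsetP[z _ ->]; apply/negP => odd_z.
  have := pow2_dvdn_card_of_odd_cycle L_row_inj L_twist u_gt0 beta_dvd_porbit odd_z.
  by rewrite card_ord n_eq expnS mulnC dvdn_pmul2l ?expn_gt0 // dvdn2 odd_v.
split=> //; case: u n_eq {beta_dvd beta_dvd_porbit} gamma_even => [|u] n_eq gamma_even.
  by apply: card_odd_porbits_le L_row_inj L_twist _; rewrite card_ord n_eq mul1n.
rewrite /n_odd_cycles (_ : [set c in porbits gamma | odd #|c|] = set0) ?cards0 //.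
apply/setP => c; rewrite !inE.
by case: (boolP (c \in porbits gamma)) => // /(gamma_even isT) /negbTE.
Qed.
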